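(* Let $\mu$ be a positive Borel measure on $\mathbb{R}$, absolutely continuous with respect to Lebesgue measure, with finite moments of all orders, supported on a set $E\subseteq\mathbb{R}$ with infinitely many points, and let $c\in\mathbb{R}\setminus E$ and $N>0$. With the notation of the context, for every $n\ge1$, $$Q_n^{c,N}(x)=P_n(x)+\Lambda_n^c\,P_{n-1}(x),\qquad \Lambda_n^c=\Lambda_n^c(N)=\frac{\pi_{n-1}-r_{n-1}}{1+NB_n^c}-\pi_{n-1},$$ where $\pi_{n-1}=\frac{P_n(c)}{P_{n-1}(c)}$, $r_{n-1}=\frac{F_n(c)}{F_{n-1}(c)}$ and $B_n^c=\frac{-Q_n^c(c)P_{n-1}(c)}{\|P_{n-1}\|_\mu^2}$. In particular $\Lambda_n^c$ does not depend on $x$.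
   Context: $\{P_n\}_{n\ge0}$ is the monic orthogonal polynomial sequence (MOPS) for $\mu$, $\|f\|_\mu^2=\int_E f^2\,d\mu$. $F_n(s)=\int_E \frac{P_n(x)}{x-s}\,d\mu(x)$ for $s\in\mathbb{C}\setminus E$ (functions of the second kind), with the convention $F_{-1}(c)=1$. $\{Q_n^c\}_{n\ge0}$ is the MOPS with respect to $\langle f,g\rangle_\nu=\int_E f(x)g(x)\frac{1}{x-c}d\mu(x)$. $\{Q_n^{c,N}\}_{n\ge0}$ is the MOPS with respect to $\langle f,g\rangle_{\nu_N}=\int_E f(x)g(x)\frac{1}{x-c}d\mu(x)+Nf(c)g(c)$, i.e. for the Geronimus perturbed measure $\frac{1}{x-c}d\mu(x)+N\delta(x-c)$. *)

From HB Require Import structures.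
From mathcomp Require Import all_boot all_order all_algebra.
From mathcomp Require Import all_classical all_reals all_analysis.
Set Implicit Arguments. Unset Strict Implicit. Unset Printing Implicit Defensive.
Import Order.TTheory GRing.Theory Num.Theory.
Import numFieldNormedType.Exports.
Local Open Scope classical_set_scope.
Local Open Scope ring_scope.

(* Bilinear form of mu: <p,q>_mu = int_E p q dmu  (mu is carried by E). *)
Definition mu_ip (R : realType) (mu : {measure set R -> \bar R})
  (p q : {poly R}) : R :=
  Rintegral mu setT (fun x => p.[x] * q.[x]).

Definition nu_ip (R : realType) (mu : {measure set R -> \bar R}) (c : R)
  (p q : {poly R}) : R :=
  Rintegral mu setT (fun x => p.[x] * q.[x] / (x - c)).

Definition nuN_ip (R : realType) (mu : {measure set R -> \bar R}) (c N : R)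
  (p q : {poly R}) : R :=
  nu_ip mu c p q + N * p.[c] * q.[c].

Definition is_MOPS (R : realType) (ip : {poly R} -> {poly R} -> R)
  (P : nat -> {poly R}) : Prop :=
  forall n : nat, P n \is monic /\ size (P n) = n.+1 /\
    (forall m : nat, (m < n)%N -> ip (P n) (P m) = 0) /\ ip (P n) (P n) != 0.

Definition Fsk (R : realType) (mu : {measure set R -> \bar R})
  (P : nat -> {poly R}) (n : nat) (s : R) : R :=
  Rintegral mu setT (fun x => (P n).[x] / (x - s)).

Definition msupport (R : realType) (mu : {measure set R -> \bar R}) : set R :=
  [set x | forall e : R, 0 < e -> (0 < mu (ball x e))%E].

Definition Lambda (R : realType) (mu : {measure set R -> \bar R})
  (P Qc : nat -> {poly R}) (c N : R) (n : nat) : R :=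
  let pi := (P n).[c] / (P n.-1).[c] in
  let r := Fsk mu P n c / Fsk mu P n.-1 c in
  let B := - (Qc n).[c] * (P n.-1).[c] / mu_ip mu (P n.-1) (P n.-1) in
  (pi - r) / (1 + N * B) - pi.

From HB Require Import structures.
From mathcomp Require Import all_boot all_order all_algebra.
From mathcomp Require Import all_classical all_reals all_analysis.
From mathcomp Require Import ring measurable_realfun.
Import Order.TTheory GRing.Theory Num.Theory.
Import numFieldNormedType.Exports.
Set Implicit Arguments. Unset Strict Implicit. Unset Printing Implicit Defensive.
Local Open Scope classical_set_scope.
Local Open Scope ring_scope.

(* Write I p = int p dmu and J p = int p(x)/(x - c) dmu, so that the three forms are
   I (p q), J (p q) and J (p q) + N p(c) q(c).  As c is outside the support, mu gives
   no mass to a ball around c, so J is a linear functional with J ((X - c) s) = I s;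
   dividing q by X - c gives J (p q) = I (p (q %/ (X - c))) + q(c) J p.  Hence
   P_n + L P_{n-1} is nu_N-orthogonal to all polynomials of degree < n as soon as the
   scalar equation F_n(c) + N P_n(c) + L (F_{n-1}(c) + N P_{n-1}(c)) = 0 holds, and it
   is then Q_n^{c,N} by uniqueness.  That equation is solved by Lambda_n^c thanks to
   P_{n-1}(c) F_n(c) - P_n(c) F_{n-1}(c) = |P_{n-1}|^2 and
   |P_{n-1}|^2 + Q_n^c(c) F_{n-1}(c) = 0. *)

Lemma size_sub_coef_monic (R : nzRingType) (p q : {poly R}) n :
  (size p <= n.+1)%N -> q \is monic -> size q = n.+1 ->
  (size (p - p`_n *: q)%R <= n)%N.
Proof.
move=> sp /monicP lq sq; apply/leq_sizeP => j le_nj.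
rewrite coefB coefZ; have [->|ne_jn] := eqVneq j n.
  by move: lq; rewrite lead_coefE sq => ->; rewrite mulr1 subrr.
have lt_nj : (n < j)%N by rewrite ltn_neqAle eq_sym ne_jn.
by rewrite (leq_sizeP _ _ sp) // (leq_sizeP _ _ (eq_leq sq)) // mulr0 subrr.
Qed.

Lemma size_monicB (R : nzRingType) (p q : {poly R}) n :
  p \is monic -> q \is monic -> size p = n.+1 -> size q = n.+1 ->
  (size (p - q)%R <= n)%N.
Proof.
move=> /monicP lp mq sp sq.
have pn1 : p`_n = 1 by rewrite -lp lead_coefE sp.
by have := size_sub_coef_monic (eq_leq sp) mq sq; rewrite pn1 scale1r.
Qed.

Lemma monic_divXsubC (R : fieldType) (p : {poly R}) (c : R) :
  p \is monic -> (1 < size p)%N -> p %/ ('X - c%:P) \is monic.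
Proof.
move=> /monicP lp sp; set d := p %/ _.
have sd : size d = (size p).-1.
  by rewrite size_divp ?polyXsubC_eq0 // size_XsubC subn1.
have d0 : d != 0 by rewrite -size_poly_eq0 sd -subn1 subn_eq0 -ltnNge.
apply/monicP; rewrite -(lead_coef_Mmonic _ (monicXsubC c)) -lp.
rewrite [in RHS](divp_eq p ('X - c%:P)) modp_XsubC lead_coefDl //.
rewrite size_Mmonic ?monicXsubC // sd size_XsubC addn2 /=.
by rewrite prednK ?(leq_ltn_trans (size_polyC_leq1 _) sp) // ltnW.
Qed.

Lemma eq_is_MOPS (R : realType) (ip ip' : {poly R} -> {poly R} -> R) Q :
  (forall p q, ip p q = ip' p q) -> is_MOPS ip Q -> is_MOPS ip' Q.
Proof. by move=> e; have -> : ip = ip' by apply/funext => p; apply/funext. Qed.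

Lemma geronimus_coef_eq0 (F : fieldType) (a b h Fa Fb q N : F) :
  b != 0 -> h != 0 -> Fb != 0 -> Fb + N * b != 0 ->
  b * Fa = h + a * Fb -> h + q * Fb = 0 ->
  Fa + N * a + ((a / b - Fa / Fb) / (1 + N * (- q * b / h)) - a / b) * (Fb + N * b) = 0.
Proof.
move=> b_neq0 h_neq0 Fb_neq0 G_neq0 W E.
have -> : q = - h / Fb.
  by apply: (mulIf Fb_neq0); rewrite divfK // -[- h]add0r -E addrC addKr.
have -> : Fa = (h + a * Fb) / b by rewrite -W mulrC mulKf.
field; have -> : Fb * h + N * (- - h * b) = h * (Fb + N * b) by ring.
by rewrite b_neq0 h_neq0 Fb_neq0 mulf_neq0.
Qed.

Section MonicOrthogonalPolynomials.
Variables (R : realType) (L : {poly R} -> R).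
Hypothesis L_linear : linear_for *%R L.
Implicit Types p q r T : {poly R}.
Variable Q : nat -> {poly R}.
Hypothesis Q_MOPS : is_MOPS (fun p q => L (p * q)) Q.

Let LB : {morph L : p q / p - q} := zmod_morphism_linear L_linear.
Let LZ : forall a p, L (a *: p) = a * L p := scalable_linear L_linear.

Lemma MOPS_monic n : Q n \is monic. Proof. by case: (Q_MOPS n). Qed.
Lemma size_MOPS n : size (Q n) = n.+1. Proof. by case: (Q_MOPS n) => _ []. Qed.
Lemma MOPS_orth n m : (m < n)%N -> L (Q n * Q m) = 0.
Proof. by case: (Q_MOPS n) => _ [_ []] + _; apply. Qed.
Lemma MOPS_norm_neq0 n : L (Q n * Q n) != 0.
Proof. by case: (Q_MOPS n) => _ [_ []]. Qed.

Lemma orth_span_MOPS r n :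
  (forall m, (m < n)%N -> L (r * Q m) = 0) ->
  forall q, (size q <= n)%N -> L (r * q) = 0.
Proof.
elim: n => [_ q /size_poly_leq0P ->|n IH rQ q sq].
  by rewrite mulr0 -(subrr 0) LB subrr.
have -> : q = q`_n *: Q n + (q - q`_n *: Q n) by rewrite addrC subrK.
rewrite mulrDr -scalerAr L_linear rQ // mulr0 add0r.
apply: IH => [m lt_mn|]; first by apply: rQ; apply: ltnW.
exact: size_sub_coef_monic (MOPS_monic n) (size_MOPS n).
Qed.

Lemma MOPS_orth_size n q : (size q <= n)%N -> L (Q n * q) = 0.
Proof. by apply: orth_span_MOPS => m; apply: MOPS_orth. Qed.

Lemma MOPS_eq0 n p :
  (size p <= n)%N -> (forall m, (m < n)%N -> L (p * Q m) = 0) -> p = 0.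
Proof.
elim: n p => [p /size_poly_leq0P //|n IH p sp pQ].
have p_eq : p = p`_n *: Q n.
  apply/eqP; rewrite -subr_eq0; apply/eqP/IH => [|m lt_mn].
    exact: size_sub_coef_monic (MOPS_monic n) (size_MOPS n).
  by rewrite mulrBl -scalerAl LB LZ MOPS_orth // pQ ?mulr0 ?subrr // ltnW.
have /eqP := pQ n (ltnSn n); rewrite p_eq -scalerAl LZ mulf_eq0.
by rewrite (negbTE (MOPS_norm_neq0 n)) orbF => /eqP ->; rewrite scale0r.
Qed.

Lemma MOPS_unique n T :
  T \is monic -> size T = n.+1 ->
  (forall m, (m < n)%N -> L (T * Q m) = 0) -> T = Q n.
Proof.
move=> mT sT TQ; apply/eqP; rewrite -subr_eq0; apply/eqP.
apply: (@MOPS_eq0 n); first exact: size_monicB (MOPS_monic n) sT (size_MOPS n).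
by move=> m lt_mn; rewrite mulrBl LB TQ // MOPS_orth // subrr.
Qed.

End MonicOrthogonalPolynomials.

Section SecondKindFunctional.
Variables (R : realType) (I J : {poly R} -> R) (c : R).
Hypotheses (I_linear : linear_for *%R I) (J_linear : linear_for *%R J).
Hypothesis J_XsubC : forall s, J (('X - c%:P) * s) = I s.
Implicit Types p q s T : {poly R}.

Let IB : {morph I : p q / p - q} := zmod_morphism_linear I_linear.
Let JZ : forall a p, J (a *: p) = a * J p := scalable_linear J_linear.
Let JD p q : J (p + q) = J p + J q.
Proof. by have := J_linear 1 p q; rewrite scale1r mul1r. Qed.

Lemma J_mul p q : J (p * q) = I (p * (q %/ ('X - c%:P))) + q.[c] * J p.
Proof.
rewrite {1}(divp_eq q ('X - c%:P)) modp_XsubC -J_XsubC [RHS]addrC -J_linear.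
by congr J; rewrite -mul_polyC; ring.
Qed.

Variable P : nat -> {poly R}.
Hypothesis P_MOPS : is_MOPS (fun p q => I (p * q)) P.

Let P_monic : forall n, P n \is monic := MOPS_monic P_MOPS.
Let size_P : forall n, size (P n) = n.+1 := size_MOPS P_MOPS.

Lemma J_MOPS_mul k q : (size q <= k.+1)%N -> J (P k * q) = q.[c] * J (P k).
Proof.
move=> sq; rewrite J_mul (MOPS_orth_size I_linear P_MOPS) ?add0r //.
by rewrite size_divp ?polyXsubC_eq0 // size_XsubC leq_subLR.
Qed.

Lemma I_MOPS_mul_monic m u :
  u \is monic -> size u = m.+1 -> I (P m * u) = I (P m * P m).
Proof.
move=> mu su; apply/eqP; rewrite -subr_eq0 -IB -mulrBr; apply/eqP.
exact/(MOPS_orth_size I_linear P_MOPS)/size_monicB.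
Qed.

Lemma J_MOPS_mul_monic m T :
  T \is monic -> size T = m.+2 -> J (P m * T) = I (P m * P m) + T.[c] * J (P m).
Proof.
move=> mT sT; rewrite J_mul I_MOPS_mul_monic ?monic_divXsubC ?sT //.
by rewrite size_divp ?polyXsubC_eq0 // size_XsubC sT.
Qed.

Lemma wronskian_second_kind m :
  (P m).[c] * J (P m.+1) = I (P m * P m) + (P m.+1).[c] * J (P m).
Proof.
by rewrite -(@J_MOPS_mul m.+1 (P m)) ?size_P // -J_MOPS_mul_monic // mulrC.
Qed.

Definition geronimus N p := J p + N * p.[c].

Lemma geronimus_linear N : linear_for *%R (geronimus N).
Proof. by move=> a p q; rewrite /geronimus J_linear hornerD hornerZ; ring. Qed.

Lemma geronimus0 p : geronimus 0 p = J p.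
Proof. by rewrite /geronimus mul0r addr0. Qed.

Lemma geronimus_MOPS_eval N Q m :
  is_MOPS (fun p q => geronimus N (p * q)) Q ->
  I (P m * P m) + (Q m.+1).[c] * geronimus N (P m) = 0.
Proof.
move=> Q_MOPS.
have := MOPS_orth_size (geronimus_linear N) Q_MOPS (eq_leq (size_P m)).
rewrite /geronimus mulrC J_MOPS_mul_monic ?(MOPS_monic Q_MOPS) ?(size_MOPS Q_MOPS) //.
by rewrite hornerM => <-; ring.
Qed.

Lemma geronimus_mul N m lam q : (size q <= m.+1)%N ->
  geronimus N ((P m.+1 + lam *: P m) * q) = q.[c] * geronimus N (P m.+1 + lam *: P m).
Proof.
move=> sq; rewrite /geronimus mulrDl -scalerAl !JD !JZ.
by rewrite !J_MOPS_mul ?(leqW sq) // !(hornerD, hornerZ, hornerM); ring.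
Qed.

Lemma geronimus_MOPS_succ N Q m lam :
  is_MOPS (fun p q => geronimus N (p * q)) Q ->
  geronimus N (P m.+1 + lam *: P m) = 0 -> Q m.+1 = P m.+1 + lam *: P m.
Proof.
move=> Q_MOPS G0.
have lt_size : (size (lam *: P m) < size (P m.+1))%N.
  by rewrite (leq_ltn_trans (size_scale_leq _ _)) ?size_P.
symmetry; apply: (MOPS_unique (geronimus_linear N) Q_MOPS).
- by apply/monicP; rewrite lead_coefDl //; apply/monicP.
- by rewrite size_polyDl.
- by move=> j lt_jm; rewrite geronimus_mul ?G0 ?mulr0 // (size_MOPS Q_MOPS).
Qed.

Theorem geronimus_MOPS_formula N Qc QcN m :
  is_MOPS (fun p q => J (p * q)) Qc ->
  is_MOPS (fun p q => geronimus N (p * q)) QcN ->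
  (P m).[c] != 0 ->
  QcN m.+1 = P m.+1 + ((((P m.+1).[c] / (P m).[c] - J (P m.+1) / J (P m)) /
     (1 + N * (- (Qc m.+1).[c] * (P m).[c] / I (P m * P m)))) -
     (P m.+1).[c] / (P m).[c]) *: P m.
Proof.
move=> Qc_MOPS QcN_MOPS b_neq0; apply: (geronimus_MOPS_succ QcN_MOPS).
have Qc_MOPS0 : is_MOPS (fun p q => geronimus 0 (p * q)) Qc.
  by apply: eq_is_MOPS Qc_MOPS => p q; rewrite geronimus0.
have Qc_eval := geronimus_MOPS_eval m Qc_MOPS0; rewrite geronimus0 in Qc_eval.
have QcN_eval := geronimus_MOPS_eval m QcN_MOPS.
have h_neq0 := MOPS_norm_neq0 P_MOPS m.
have G_neq0 : geronimus N (P m) != 0.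
  by apply: contra_neq h_neq0 => G0; move: QcN_eval; rewrite G0 mulr0 addr0.
have Fb_neq0 : J (P m) != 0.
  by apply: contra_neq h_neq0 => Fb0; move: Qc_eval; rewrite Fb0 mulr0 addr0.
rewrite /geronimus in G_neq0; rewrite addrC geronimus_linear addrC /geronimus.
exact: geronimus_coef_eq0 (wronskian_second_kind m) Qc_eval.
Qed.
End SecondKindFunctional.

Section CauchyIntegral.
Variables (R : realType) (mu : {measure set R -> \bar R}) (c : R).
Implicit Types p q s : {poly R}.

Definition poly_integral p := Rintegral mu setT (fun x => p.[x]).
Definition cauchy_integral p := Rintegral mu setT (fun x => p.[x] / (x - c)).

Lemma mu_ipE p q : mu_ip mu p q = poly_integral (p * q).
Proof.
by rewrite /mu_ip /poly_integral; congr Rintegral; apply/funext => x; rewrite hornerM.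
Qed.

Lemma nu_ipE p q : nu_ip mu c p q = cauchy_integral (p * q).
Proof.
by rewrite /nu_ip /cauchy_integral; congr Rintegral; apply/funext => x; rewrite hornerM.
Qed.

Lemma msupport_ball0 : ~ msupport mu c -> exists2 e : R, 0 < e & mu (ball c e) = 0%E.
Proof.
move=> /existsNP [e /not_implyP [e_gt0 /negP]]; rewrite -leNgt => mu_le0.
by exists e => //; apply/eqP; rewrite eq_le mu_le0 measure_ge0.
Qed.

Hypothesis moments : forall k, mu.-integrable setT (fun x => (x ^+ k)%:E).

Lemma integrable_horner p : mu.-integrable setT (fun x => (p.[x])%:E).
Proof.
under eq_fun do rewrite horner_coef -sumEFin.
apply: integrable_sum => // i _; under eq_fun do rewrite EFinM.
exact: integrableZl.
Qed.

Lemma Rintegral_linear (F : {poly R} -> R -> R) :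
  (forall p, mu.-integrable setT (fun x => (F p x)%:E)) ->
  (forall a p q x, F (a *: p + q) x = a * F p x + F q x) ->
  linear_for *%R (fun p => Rintegral mu setT (fun x => F p x)).
Proof.
move=> F_int F_lin a p q.
have -> : (fun x => F (a *: p + q) x) = (fun x => a * F p x + F q x).
  by apply/funext => x; rewrite F_lin.
have aF_int : mu.-integrable setT (EFin \o (fun x => a * F p x)).
  have -> : EFin \o (fun x => a * F p x) = (fun x => a%:E * (F p x)%:E)%E.
    by apply/funext => x; rewrite /= EFinM.
  exact: integrableZl.
by rewrite RintegralD ?RintegralZl //; exact: F_int.
Qed.

Lemma poly_integral_linear : linear_for *%R poly_integral.
Proof.
apply: Rintegral_linear => [|a p q x]; first exact: integrable_horner.
by rewrite hornerD hornerZ.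
Qed.

Lemma measurable_invXsubC : measurable_fun setT (fun x : R => (x - c)^-1).
Proof.
rewrite -(setvU [set c]).
apply/(measurable_funU _ (measurableC (measurable_set1 c)) (measurable_set1 c)).
split; last exact: measurable_fun_set1.
apply: open_continuous_measurable_fun; first by rewrite openC; exact: closed_eq.
move=> x; rewrite inE /= => /eqP x_neq_c.
apply: (@continuousV _ _ (fun y : R => y - c)); first by rewrite subr_eq0.
by apply: continuousB; [exact: cvg_id | exact: cvg_cst].
Qed.

Variable e : R.
Hypotheses (e_gt0 : 0 < e) (mu_ball0 : mu (ball c e) = 0%E).

Let mS : measurable (~` ball c e) := measurableC (measurable_ball c e).

Lemma dist_out_ball x : (~` ball c e) x -> e <= `|x - c|.
Proof.
move=> /= x_far; rewrite leNgt; apply: contra_notN x_far.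
by rewrite -ball_normE /= distrC.
Qed.

Lemma XsubC_out_ball_neq0 x : (~` ball c e) x -> x - c != 0.
Proof. by move/dist_out_ball/(lt_le_trans e_gt0); rewrite normr_gt0. Qed.

Lemma integrable_invXsubC_out : mu.-integrable (~` ball c e) (fun x => ((x - c)^-1)%:E).
Proof.
apply: (le_integrable mS (g := fun x => (e^-1)%:E * (x ^+ 0)%:E)%E).
- by apply/measurable_EFinP; exact: measurable_funS measurable_invXsubC.
- move=> x /dist_out_ball le_e; rewrite expr0 mule1 lee_fin normfV gtr0_norm ?invr_gt0 //.
  by rewrite lef_pV2 // posrE ?(lt_le_trans e_gt0).
- by apply: integrableZl => //; exact: integrableS measurableT mS (subsetT _) (moments 0).
Qed.

Lemma integrable_horner_divXsubC p : mu.-integrable setT (fun x => (p.[x] / (x - c))%:E).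
Proof.
apply/(negligible_integrable (measurable_ball c e) measurableT _ mu_ball0).
  apply/measurable_EFinP/measurable_funM; last exact: measurable_invXsubC.
  by apply/measurable_EFinP; exact: measurable_int (integrable_horner p).
rewrite (setTD (ball c e)); set d := p %/ ('X - c%:P).
apply: (eq_integrable mS (fun x => (d.[x])%:E + (p.[c])%:E * ((x - c)^-1)%:E)%E).
  move=> x; rewrite inE => /XsubC_out_ball_neq0 x_neq_c /=; rewrite -EFinM -EFinD.
  rewrite {2}(divp_eq p ('X - c%:P)) modp_XsubC -/d hornerD hornerM hornerXsubC hornerC.
  by congr EFin; field.
apply: integrableD => //; last exact: integrableZl integrable_invXsubC_out.
exact: integrableS measurableT mS (subsetT _) (integrable_horner d).
Qed.

Lemma cauchy_integral_linear : linear_for *%R cauchy_integral.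
Proof.
apply: Rintegral_linear => [|a p q x]; first exact: integrable_horner_divXsubC.
by rewrite hornerD hornerZ mulrDl mulrA.
Qed.

Lemma cauchy_integral_XsubC s : cauchy_integral (('X - c%:P) * s) = poly_integral s.
Proof.
rewrite /cauchy_integral /poly_integral /Rintegral; congr fine.
rewrite !(negligible_integral (measurable_ball c e) measurableT _ mu_ball0) //;
  [|exact: integrable_horner|exact: integrable_horner_divXsubC].
apply: eq_integral => x; rewrite inE setTD => /XsubC_out_ball_neq0 x_neq_c.
by rewrite hornerM hornerXsubC mulrAC divff // mul1r.
Qed.
End CauchyIntegral.

Theorem proposition1 (R : realType) (mu : {measure set R -> \bar R})
  (E : set R) (c N : R) (P Qc QcN : nat -> {poly R}) :
  mu `<< (@lebesgue_measure R) ->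
  (forall k : nat, mu.-integrable setT (fun x : R => (x ^+ k)%:E)) ->
  E = msupport mu ->
  infinite_set E ->
  ~ E c ->
  0 < N ->
  is_MOPS (mu_ip mu) P ->
  is_MOPS (nu_ip mu c) Qc ->
  is_MOPS (nuN_ip mu c N) QcN ->
  forall n : nat, (1 <= n)%N ->
  (P n.-1).[c] != 0 ->
  QcN n = P n + Lambda mu P Qc c N n *: P n.-1.
Proof.
move=> _ moments suppE _ c_notin_E _ P_MOPS Qc_MOPS QcN_MOPS [//|m] _ /= Pc_neq0.
have [e e_gt0 mu_ball0] : exists2 e : R, 0 < e & mu (ball c e) = 0%E.
  by apply: msupport_ball0; rewrite -suppE.
have I_linear := poly_integral_linear moments.
have J_linear := cauchy_integral_linear moments e_gt0 mu_ball0.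
have J_XsubC := cauchy_integral_XsubC moments e_gt0 mu_ball0.
have {}P_MOPS := eq_is_MOPS (@mu_ipE R mu) P_MOPS.
have {}Qc_MOPS := eq_is_MOPS (@nu_ipE R mu c) Qc_MOPS.
have {}QcN_MOPS : is_MOPS (fun p q => geronimus (cauchy_integral mu c) c N (p * q)) QcN.
  by apply: eq_is_MOPS QcN_MOPS => p q; rewrite /nuN_ip nu_ipE /geronimus hornerM mulrA.
rewrite /Lambda /= mu_ipE.
exact (geronimus_MOPS_formula I_linear J_linear J_XsubC P_MOPS Qc_MOPS QcN_MOPS Pc_neq0).
Qed.
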